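(* Realize $\mathrm{SU}(2)\times\mathbb{R}$ as the group of matrices $(A,B,v)=\begin{pmatrix}A&B&0\\-\overline{B}&\overline{A}&0\\0&0&e^v\end{pmatrix}$ with $A,B\in\mathbb{C}$, $|A|^2+|B|^2=1$, $v\in\mathbb{R}$, and let $E_1=\tfrac12(e_{12}-e_{21})$, $E_2=\tfrac{i}{2}(e_{12}+e_{21})$, $E_3=\tfrac{i}{2}(e_{11}-e_{22})$, $E_4=e_{33}$ (with $e_{jk}$ the $3\times3$ matrix units), and $e_1=E_1$, $e_2=E_4-E_3$, $e_3=E_2$, $e_4=E_3$. For $\alpha_1^2+\alpha_2^2+\alpha_3^2=1$ and $\beta\in\mathbb{R}$ let $$\tilde\gamma_1(t)=\tilde\gamma_1(\alpha_1,\alpha_2,\alpha_3,\beta;t)=\exp\bigl(t(\alpha_1e_1+\alpha_2e_2+\alpha_3e_3+\beta e_4)\bigr)\exp(-t\beta e_4)$$ (the arclength-parametrized geodesics through $\mathrm{Id}$ of the left-invariant sub-Riemannian metric $d_1$ defined by $\mathrm{span}(e_1,e_2,e_3)$ with orthonormal basis $e_1,e_2,e_3$). Put $w_1=\sqrt{1-\alpha_2^2+(\beta-\alpha_2)^2}$, $n_1=\cos\frac{w_1t}{2}$, $m_1=\frac{1}{w_1}\sin\frac{w_1t}{2}$. If $\alpha_2\neq\pm1$, then $\tilde\gamma_1(t)=(A,B,v)(t)$ with $$A=\Bigl(n_1\cos\tfrac{\beta t}{2}+(\beta-\alpha_2)m_1\sin\tfrac{\beta t}{2}\Bigr)+\Bigl((\beta-\alpha_2)m_1\cos\tfrac{\beta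 t}{2}-n_1\sin\tfrac{\beta t}{2}\Bigr)i,$$ $$B=m_1\sqrt{1-\alpha_2^2}\Bigl[\cos\bigl(\tfrac{\beta t}{2}+\varphi_0\bigr)+i\sin\bigl(\tfrac{\beta t}{2}+\varphi_0\bigr)\Bigr],\qquad v=\alpha_2t,$$ where $\cos\varphi_0=\alpha_1/\sqrt{1-\alpha_2^2}$, $\sin\varphi_0=\alpha_3/\sqrt{1-\alpha_2^2}$. If $\alpha_2=\pm1$, then $\tilde\gamma_1(t)=(A,B,v)(t)$ with $A=e^{-i\alpha_2t/2}$, $B\equiv0$, $v=\alpha_2t$.
   Context: The matrices $E_1,\dots,E_4$ satisfy $[E_1,E_2]=E_3$, $[E_2,E_3]=E_1$, $[E_3,E_1]=E_2$, $[E_i,E_4]=0$. *)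

From HB Require Import structures.
From mathcomp Require Import all_boot all_order all_algebra.
From mathcomp Require Import all_classical all_reals all_analysis.
From mathcomp Require Import complex.
Import Order.TTheory GRing.Theory Num.Theory.
Import numFieldNormedType.Exports.
Set Implicit Arguments.
Unset Strict Implicit.
Unset Printing Implicit Defensive.
Local Open Scope ring_scope.
Local Open Scope classical_set_scope.

Section Defs.
Variable R : realType.
Local Notation C := (R[i]).

Definition rC (x : R) : C := Complex x 0.
Definition iC : C := Complex 0 1.

(* indices 1,2,3 of 3x3 matrices (0-based ordinals) *)
Definition o1 : 'I_3 := @Ordinal 3 0 isT.
Definition o2 : 'I_3 := @Ordinal 3 1 isT.
Definition o3 : 'I_3 := @Ordinal 3 2 isT.

Definition eu (j k : 'I_3) : 'M[C]_3 := delta_mx j k.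

Definition E1 : 'M[C]_3 := rC (2^-1) *: (eu o1 o2 - eu o2 o1).
Definition E2 : 'M[C]_3 := (rC (2^-1) * iC) *: (eu o1 o2 + eu o2 o1).
Definition E3 : 'M[C]_3 := (rC (2^-1) * iC) *: (eu o1 o1 - eu o2 o2).
Definition E4 : 'M[C]_3 := eu o3 o3.

Definition e1 : 'M[C]_3 := E1.
Definition e2 : 'M[C]_3 := E4 - E3.
Definition e3 : 'M[C]_3 := E2.
Definition e4 : 'M[C]_3 := E3.

Definition expm_partial (M : 'M[C]_3) (N : nat) : 'M[C]_3 :=
  \sum_(k < N) rC (k`!%:R)^-1 *: M ^+ k.

Definition expm (M : 'M[C]_3) : 'M[C]_3 :=
  \matrix_(i < 3, j < 3)
    Complex (lim ((fun N : nat => @complex.Re R (expm_partial M N i j)) @ \oo) : R)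
            (lim ((fun N : nat => @complex.Im R (expm_partial M N i j)) @ \oo) : R).

Definition SU2R (A B : C) (v : R) : 'M[C]_3 :=
  \matrix_(i < 3, j < 3)
    if (i == o1) && (j == o1) then A
    else if (i == o1) && (j == o2) then B
    else if (i == o2) && (j == o1) then - conjc B
    else if (i == o2) && (j == o2) then conjc A
    else if (i == o3) && (j == o3) then rC (expR v)
    else 0.

Definition gamma1 (a1 a2 a3 b t : R) : 'M[C]_3 :=
  expm (rC t *: (rC a1 *: e1 + rC a2 *: e2 + rC a3 *: e3 + rC b *: e4))
  *m expm (rC (- (t * b)) *: e4).

Definition w1 (a2 b : R) : R := Num.sqrt (1 - a2 ^+ 2 + (b - a2) ^+ 2).
Definition n1 (a2 b t : R) : R := cos (w1 a2 b * t / 2).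
Definition m1 (a2 b t : R) : R := (w1 a2 b)^-1 * sin (w1 a2 b * t / 2).

End Defs.

From HB Require Import structures.
From mathcomp Require Import all_boot all_order all_algebra.
From mathcomp Require Import all_classical all_reals all_analysis.
From mathcomp Require Import complex.
From mathcomp Require Import ring lra.
Import Order.TTheory GRing.Theory Num.Theory.
Import numFieldNormedType.Exports.
Set Implicit Arguments.
Unset Strict Implicit.
Local Open Scope classical_set_scope.
Local Open Scope ring_scope.

(* In the SU(2) block, t (a1 e1 + a2 e2 + a3 e3 + b e4) equals (w t / 2) J,
   where J is the pure unit quaternion with axis ((b - a2), a1, a3) / w, and
   its (3,3) entry is a2 t.  Since J^2 = -1, the matrices (a + b J) (+) d
   multiply like complex numbers, so the exponential series sums coefficientwise
   to (cos u + sin u J) (+) e^(a2 t), with u = w t / 2.  The factor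
   exp(-t b e4) has the same shape for the axis (1, 0, 0), and the product of
   the two is expanded with the addition formulas.  At the poles a2 = +-1 we
   have a1 = a3 = 0, both factors share the axis (1, 0, 0) and the angles add. *)

Section CoeffRecurrence.
Variable R : realType.
Implicit Types (u : R) (k : nat).

Lemma natr_fact_neq0 k : k`!%:R != 0 :> R.
Proof. by rewrite pnatr_eq0 -lt0n fact_gt0. Qed.

Lemma cos_coeff_mul_fact u k :
  cos_coeff u k * k`!%:R = (~~ odd k)%:R * (-1) ^+ k./2 * u ^+ k.
Proof. by rewrite /cos_coeff /= divfK ?natr_fact_neq0. Qed.

Lemma sin_coeff_mul_fact u k :
  sin_coeff u k * k`!%:R = (odd k)%:R * (-1) ^+ k.-1./2 * u ^+ k.
Proof. by rewrite /sin_coeff /= divfK ?natr_fact_neq0. Qed.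

Lemma cos_coeffS_mul_fact u k :
  cos_coeff u k.+1 * k.+1`!%:R = - (sin_coeff u k * k`!%:R) * u.
Proof.
rewrite cos_coeff_mul_fact sin_coeff_mul_fact /= negbK uphalf_half exprSr.
case/boolP: (odd k) => [odd_k | _]; last by rewrite /=; ring.
have -> : k.-1./2 = k./2 by rewrite -{1}(odd_double_half k) odd_k add1n /= doubleK.
by rewrite /= exprS; ring.
Qed.

Lemma sin_coeffS_mul_fact u k :
  sin_coeff u k.+1 * k.+1`!%:R = cos_coeff u k * k`!%:R * u.
Proof. by rewrite cos_coeff_mul_fact sin_coeff_mul_fact /= exprSr; ring. Qed.

End CoeffRecurrence.

Section Su2Blocks.
Variable R : realType.
Local Notation C := (R[i]).

Lemma complex_ext (u v : C) :
  complex.Re u = complex.Re v -> complex.Im u = complex.Im v -> u = v.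
Proof. by move=> hRe hIm; apply/eqP; rewrite eq_complex hRe hIm !eqxx. Qed.

Definition su2_mx (A B d : C) : 'M[C]_3 :=
  \matrix_(i < 3, j < 3)
    if (i == o1) && (j == o1) then A
    else if (i == o1) && (j == o2) then B
    else if (i == o2) && (j == o1) then - conjc B
    else if (i == o2) && (j == o2) then conjc A
    else if (i == o3) && (j == o3) then d
    else 0.

Lemma SU2R_su2_mx (A B : C) (v : R) : SU2R A B v = su2_mx A B (rC (expR v)).
Proof. by []. Qed.

Lemma su2_mxD (A B d A' B' d' : C) :
  su2_mx A B d + su2_mx A' B' d' = su2_mx (A + A') (B + B') (d + d').
Proof.
apply/matrixP => i j; rewrite !mxE.
case: i => [[|[|[|i]]] Hi] //; case: j => [[|[|[|j]]] Hj] //=.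
all: by rewrite ?addr0 ?rmorphD ?opprD.
Qed.

Lemma su2_mxZ (r : R) (A B d : C) :
  rC r *: su2_mx A B d = su2_mx (rC r * A) (rC r * B) (rC r * d).
Proof.
apply/matrixP => i j; rewrite !mxE.
case: i => [[|[|[|i]]] Hi] //; case: j => [[|[|[|j]]] Hj] //=.
all: by rewrite ?mulr0 ?mulrN ?rmorphM /= ?oppr0.
Qed.

Lemma mul_su2_mx (A B d A' B' d' : C) :
  su2_mx A B d *m su2_mx A' B' d' =
  su2_mx (A * A' - B * conjc B') (A * B' + B * conjc A') (d * d').
Proof.
apply/matrixP => i j; rewrite !mxE !big_ord_recr big_ord0 /= !mxE.
case: i => [[|[|[|i]]] Hi] //; case: j => [[|[|[|j]]] Hj] //=.
all: rewrite ?mul0r ?mulr0 ?add0r ?addr0 //.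
all: rewrite ?rmorphB ?rmorphD ?rmorphM /= ?conjcK; ring.
Qed.

Section QuaternionLine.
Variables x y z : R.

(* (a + b J) (+) d, where J is the pure quaternion with axis (x, y, z). *)
Definition quat_mx (a b d : R) : 'M[C]_3 :=
  su2_mx (Complex a (b * x)) (Complex (b * y) (b * z)) (rC d).

Lemma quat_mx0 : quat_mx 0 0 0 = 0.
Proof.
apply/matrixP => i j; rewrite !mxE.
by case: i => [[|[|[|i]]] Hi] //; case: j => [[|[|[|j]]] Hj] //=;
  apply: complex_ext => /=; rewrite ?mul0r ?oppr0.
Qed.

Lemma quat_mx1 : quat_mx 1 0 1 = 1.
Proof.
apply/matrixP => i j; rewrite !mxE.
by case: i => [[|[|[|i]]] Hi] //; case: j => [[|[|[|j]]] Hj] //=;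
  apply: complex_ext => /=; rewrite ?mul0r ?oppr0.
Qed.

Lemma quat_mxD (a b d a' b' d' : R) :
  quat_mx a b d + quat_mx a' b' d' = quat_mx (a + a') (b + b') (d + d').
Proof. by rewrite su2_mxD; congr su2_mx; apply: complex_ext => /=; ring. Qed.

Lemma quat_mxZ (r a b d : R) :
  rC r *: quat_mx a b d = quat_mx (r * a) (r * b) (r * d).
Proof. by rewrite su2_mxZ; congr su2_mx; apply: complex_ext => /=; ring. Qed.

Lemma expm_quat_mx_lim (M : 'M[C]_3) (a b c : nat -> R) (la lb lc : R) :
  (forall N, expm_partial M N = quat_mx (a N) (b N) (c N)) ->
  a @ \oo --> la -> b @ \oo --> lb -> c @ \oo --> lc ->
  expm M = quat_mx la lb lc.
Proof.
move=> partialE cvg_a cvg_b cvg_c; apply/matrixP => i j; rewrite /expm !mxE.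
under eq_fun do rewrite partialE mxE.
under [X in Complex _ (limn X)]eq_fun do rewrite partialE mxE.
case: i => [[|[|[|i]]] Hi] //; case: j => [[|[|[|j]]] Hj] //=.
all: apply: complex_ext => /=; apply: cvg_lim => //.
all: do ?apply: cvgN; by [apply: cvg_cst | apply: cvgMr_tmp].
Qed.

Hypothesis unit_axis : x ^+ 2 + y ^+ 2 + z ^+ 2 = 1.

Lemma mul_quat_mx (a b d a' b' d' : R) :
  quat_mx a b d *m quat_mx a' b' d' =
  quat_mx (a * a' - b * b') (a * b' + b * a') (d * d').
Proof.
rewrite mul_su2_mx; congr su2_mx; apply: complex_ext => /=; try ring.
by rewrite -[b * b']mulr1 -unit_axis; ring.
Qed.

Lemma quat_mx_pow (u d : R) (k : nat) :
  quat_mx 0 u d ^+ k =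
  quat_mx (cos_coeff u k * k`!%:R) (sin_coeff u k * k`!%:R) (d ^+ k).
Proof.
elim: k => [|k IHk].
  by rewrite expr0 cos_coeff_mul_fact sin_coeff_mul_fact /= !mul0r !mul1r -quat_mx1.
rewrite exprSr IHk -mulmxE mul_quat_mx cos_coeffS_mul_fact sin_coeffS_mul_fact.
by congr quat_mx; rewrite ?exprSr; ring.
Qed.

Lemma expm_partial_quat_mx (u d : R) (N : nat) :
  expm_partial (quat_mx 0 u d) N =
  quat_mx (series (cos_coeff u) N) (series (sin_coeff u) N) (series (exp_coeff d) N).
Proof.
elim: N => [|N IHN]; first by rewrite /expm_partial big_ord0 /series /= !big_geq // quat_mx0.
rewrite /expm_partial big_ord_recr /= -/(expm_partial _ N) IHN quat_mx_pow quat_mxZ quat_mxD.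
by rewrite !seriesSr exp_coeffE ![_^-1 * (_ * _)]mulrCA mulVf ?natr_fact_neq0 ?mulr1.
Qed.

Lemma expm_quat_mx (u d : R) :
  expm (quat_mx 0 u d) = quat_mx (cos u) (sin u) (expR d).
Proof.
apply: expm_quat_mx_lim; first exact: expm_partial_quat_mx.
- by rewrite cos.unlock; apply: is_cvg_series_cos_coeff.
- by rewrite sin.unlock; apply: is_cvg_series_sin_coeff.
- by rewrite expRE /pseries -exp_coeffE; apply: is_cvg_series_exp_coeff.
Qed.

End QuaternionLine.
End Su2Blocks.

Section Geodesic.
Variables (R : realType) (a1 a2 a3 b : R).

Lemma generator_quat_mx (t x y z u : R) :
  u * x = t * (b - a2) / 2 -> u * y = t * a1 / 2 -> u * z = t * a3 / 2 ->
  rC t *: (rC a1 *: e1 R + rC a2 *: e2 R + rC a3 *: e3 R + rC b *: e4 R) =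
  quat_mx x y z 0 u (a2 * t).
Proof.
move=> ux uy uz; apply/matrixP => i j.
rewrite /e1 /e2 /e3 /e4 /E1 /E2 /E3 /E4 /eu !mxE.
case: i => [[|[|[|i]]] Hi] //; case: j => [[|[|[|j]]] Hj] //=.
all: apply: complex_ext => /=; rewrite ?mulrN ?ux ?uy ?uz; ring.
Qed.

Lemma e4_quat_mx (s : R) : rC s *: e4 R = quat_mx 1 0 0 0 (s / 2) 0.
Proof.
apply/matrixP => i j; rewrite /e4 /E3 /eu !mxE.
case: i => [[|[|[|i]]] Hi] //; case: j => [[|[|[|j]]] Hj] //=.
all: apply: complex_ext => /=; ring.
Qed.

Lemma gamma1_quat_mx (t x y z u : R) :
  x ^+ 2 + y ^+ 2 + z ^+ 2 = 1 ->
  u * x = t * (b - a2) / 2 -> u * y = t * a1 / 2 -> u * z = t * a3 / 2 ->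
  gamma1 a1 a2 a3 b t =
  quat_mx x y z (cos u) (sin u) (expR (a2 * t)) *m
  quat_mx 1 0 0 (cos (- (t * b) / 2)) (sin (- (t * b) / 2)) 1.
Proof.
move=> unit_axis ux uy uz.
have unit_e1 : 1 ^+ 2 + 0 ^+ 2 + 0 ^+ 2 = 1 :> R by ring.
rewrite /gamma1 (generator_quat_mx ux uy uz) e4_quat_mx.
by rewrite !expm_quat_mx // expR0.
Qed.

End Geodesic.

Section SphereParameters.
Variables (R : realType) (a1 a2 a3 b : R).
Hypothesis sphere : a1 ^+ 2 + a2 ^+ 2 + a3 ^+ 2 = 1.

Lemma sqr_lt1_off_poles : a2 != 1 -> a2 != -1 -> a2 ^+ 2 < 1.
Proof.
move=> a2_neq1 a2_neqN1; rewrite lt_neqAle sqrf_eq1 negb_or a2_neq1 a2_neqN1 /=.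
by move: sphere (sqr_ge0 a1) (sqr_ge0 a3); lra.
Qed.

Lemma axis_eq0_at_poles : a2 = 1 \/ a2 = -1 -> a1 = 0 /\ a3 = 0.
Proof.
move=> a2_pm1; have a2_sqr : a2 ^+ 2 = 1 by case: a2_pm1 => ->; rewrite ?sqrrN expr1n.
have /eqP : a1 ^+ 2 + a3 ^+ 2 = 0 by move: sphere; lra.
by rewrite paddr_eq0 ?sqr_ge0 // !sqrf_eq0 => /andP[/eqP-> /eqP->].
Qed.

Lemma w1_gt0 : a2 ^+ 2 < 1 -> 0 < w1 a2 b.
Proof. by move=> a2_sqr_lt1; rewrite sqrtr_gt0; have := sqr_ge0 (b - a2); lra. Qed.

Lemma w1_sqr : w1 a2 b ^+ 2 = a1 ^+ 2 + a3 ^+ 2 + (b - a2) ^+ 2.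
Proof.
rewrite /w1 sqr_sqrtr; first by move: sphere; lra.
by move: sphere (sqr_ge0 a1) (sqr_ge0 a3) (sqr_ge0 (b - a2)); lra.
Qed.

Lemma geodesic_axis_unit :
  a2 ^+ 2 < 1 ->
  ((b - a2) / w1 a2 b) ^+ 2 + (a1 / w1 a2 b) ^+ 2 + (a3 / w1 a2 b) ^+ 2 = 1.
Proof.
move=> /w1_gt0 /lt0r_neq0 w_neq0.
by rewrite -(divff (expf_neq0 2 w_neq0)) {1}w1_sqr; field.
Qed.

End SphereParameters.

Theorem theorem4 (R : realType) (a1 a2 a3 b : R) :
  a1 ^+ 2 + a2 ^+ 2 + a3 ^+ 2 = 1 ->
  (a2 != 1 -> a2 != -1 ->
   forall phi0 : R,
     cos phi0 = a1 / Num.sqrt (1 - a2 ^+ 2) ->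
     sin phi0 = a3 / Num.sqrt (1 - a2 ^+ 2) ->
     forall t : R,
       gamma1 a1 a2 a3 b t =
       SU2R
         (Complex (n1 a2 b t * cos (b * t / 2) + (b - a2) * m1 a2 b t * sin (b * t / 2))
                  ((b - a2) * m1 a2 b t * cos (b * t / 2) - n1 a2 b t * sin (b * t / 2)))
         (Complex (m1 a2 b t * Num.sqrt (1 - a2 ^+ 2) * cos (b * t / 2 + phi0))
                  (m1 a2 b t * Num.sqrt (1 - a2 ^+ 2) * sin (b * t / 2 + phi0)))
         (a2 * t))
  /\
  ((a2 = 1 \/ a2 = -1) ->
   forall t : R,
     gamma1 a1 a2 a3 b t =
     SU2R (Complex (cos (- (a2 * t) / 2)) (sin (- (a2 * t) / 2))) 0 (a2 * t)).
Proof.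
move=> sphere; split=> [a2_neq1 a2_neqN1 phi0 cos_phi0 sin_phi0 t | a2_pm1 t].
- have a2_sqr_lt1 := sqr_lt1_off_poles sphere a2_neq1 a2_neqN1.
  set S := Num.sqrt (1 - a2 ^+ 2) in cos_phi0 sin_phi0 *.
  have S_neq0 : S != 0 by rewrite gt_eqF // sqrtr_gt0 subr_gt0.
  have w_neq0 := lt0r_neq0 (w1_gt0 b a2_sqr_lt1).
  rewrite (gamma1_quat_mx (u := w1 a2 b * t / 2) (geodesic_axis_unit b sphere a2_sqr_lt1));
    try by field.
  have -> : - (t * b) / 2 = - (b * t / 2) by ring.
  rewrite /quat_mx mul_su2_mx SU2R_su2_mx /n1 /m1 cosN sinN cosD sinD cos_phi0 sin_phi0.
  by congr su2_mx; apply: complex_ext => /=; field; rewrite ?S_neq0 ?w_neq0.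
- have [a1_eq0 a3_eq0] := axis_eq0_at_poles sphere a2_pm1.
  have unit_e1 : 1 ^+ 2 + 0 ^+ 2 + 0 ^+ 2 = 1 :> R by ring.
  rewrite (gamma1_quat_mx (u := t * (b - a2) / 2) unit_e1);
    try by rewrite ?a1_eq0 ?a3_eq0; ring.
  rewrite mul_quat_mx // SU2R_su2_mx.
  have -> : - (a2 * t) / 2 = t * (b - a2) / 2 + - (t * b) / 2 by ring.
  by rewrite cosD sinD; congr su2_mx; apply: complex_ext => /=; ring.
Qed.
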